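(* Let $R$ be a commutative ring with nonzero identity, $\delta$ and $\gamma$ expansions of ideals of $R$, and $I$ a proper ideal of $R$. (1) If $\delta(I)$ is an $n$-ideal of $R$, then $I$ is a $\delta$-$n$-ideal of $R$. Conversely, if $\delta=\delta_1$ and $I$ is a $\delta_1$-$n$-ideal, then $\delta_1(I)=\sqrt{I}$ is an $n$-ideal of $R$. (2) If $\delta(J)\subseteq\gamma(J)$ for all ideals $J$ of $R$ and $I$ is a $\delta$-$n$-ideal of $R$, then $I$ is a $\gamma$-$n$-ideal of $R$. (3) If $\gamma(I)$ is a $\delta$-$n$-ideal of $R$, then $I$ is a $\delta\circ\gamma$-$n$-ideal of $R$.
   Context: An expansion of ideals of a ring $R$ is a map $\delta$ from the set of ideals of $R$ to itself such that $I\subseteq\delta(I)$ for every ideal $I$, and $\delta(I)\subseteq\delta(J)$ whenever $I\subseteq J$. $\sqrt{0}$ denotes the nilradical of $R$, and $\delta_1$ is the expansion $\delta_1(J)=\sqrt{J}$. Given an expansion $\delta$, a proper ideal $I$ of $R$ is a $\delta$-$n$-ideal if whenever $a,b\in R$ with $ab\in I$ and $a\notin\sqrt{0}$, then $b\in\delta(I)$. An $n$-ideal is a proper ideal $I$ such that $ab\in I$ and $a\notin\sqrt{0}$ imply $b\in I$. *)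

From mathcomp Require Import all_boot all_algebra.
Set Implicit Arguments. Unset Strict Implicit. Unset Printing Implicit Defensive.
Import GRing.Theory.
Local Open Scope ring_scope.


Definition is_idl {R : comNzRingType} (I : R -> Prop) : Prop :=
  [/\ I 0, (forall x y, I x -> I y -> I (x + y)) & (forall r x, I x -> I (r * x))].

Definition proper_idl {R : comNzRingType} (I : R -> Prop) : Prop := is_idl I /\ ~ I 1.

Definition psubset {R : comNzRingType} (I J : R -> Prop) : Prop := forall x, I x -> J x.

Definition ideal_expansion {R : comNzRingType} (d : (R -> Prop) -> (R -> Prop)) : Prop :=
  [/\ (forall I, is_idl I -> is_idl (d I)),
      (forall I, is_idl I -> psubset I (d I)) &
      (forall I J, is_idl I -> is_idl J -> psubset I J -> psubset (d I) (d J))].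

Definition in_nilrad {R : comNzRingType} (x : R) : Prop := exists n : nat, x ^+ n = 0.

(* radical sqrt(J); delta_1 J = ideal_rad J *)
Definition ideal_rad {R : comNzRingType} (J : R -> Prop) (x : R) : Prop := exists n : nat, J (x ^+ n).

Definition is_n_ideal {R : comNzRingType} (I : R -> Prop) : Prop :=
  proper_idl I /\ forall a b, I (a * b) -> ~ in_nilrad a -> I b.

Definition is_delta_n_ideal {R : comNzRingType} (d : (R -> Prop) -> (R -> Prop)) (I : R -> Prop) : Prop :=
  proper_idl I /\ forall a b, I (a * b) -> ~ in_nilrad a -> d I b.

From mathcomp Require Import all_boot all_algebra.
Set Implicit Arguments. Unset Strict Implicit. Unset Printing Implicit Defensive.
Import GRing.Theory.
Local Open Scope ring_scope.

Section Radical.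

Variables (R : comNzRingType) (I : R -> Prop).
Hypothesis idlI : is_idl I.

Lemma idl_expr_ge (x : R) (n k : nat) : (n <= k)%N -> I (x ^+ n) -> I (x ^+ k).
Proof.
have [_ _ IM] := idlI.
by move=> le_nk Ixn; rewrite -(subnK le_nk) exprD; apply: IM.
Qed.

(* Binomial expansion: in each term x^(n+m-i) y^i, either i >= m or n+m-i >= n. *)
Lemma idl_rad_add (x y : R) (n m : nat) :
  I (x ^+ n) -> I (y ^+ m) -> I ((x + y) ^+ (n + m)).
Proof.
have [I0 ID IM] := idlI.
move=> Ixn Iym; rewrite exprDn; apply: (big_ind I) => // i _.
rewrite -mulr_natl; apply: (IM).
have [le_mi | lt_im] := leqP m i.
- by apply: IM; apply: idl_expr_ge Iym.
- rewrite mulrC; apply: IM; apply: idl_expr_ge Ixn.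
  by rewrite -addnBA ?leq_addr // ltnW.
Qed.

Lemma is_idl_rad : is_idl (ideal_rad I).
Proof.
have [I0 _ IM] := idlI; split.
- by exists 1%N; rewrite expr1.
- by move=> x y [n Ixn] [m Iym]; exists (n + m)%N; apply: idl_rad_add.
- by move=> r x [n Ixn]; exists n; rewrite exprMn; apply: IM.
Qed.

Lemma proper_idl_rad : ~ I 1 -> proper_idl (ideal_rad I).
Proof. by move=> nI1; split; [exact: is_idl_rad | case=> n; rewrite expr1n]. Qed.

End Radical.

Lemma in_nilradX (R : comNzRingType) (x : R) (n : nat) :
  in_nilrad (x ^+ n) -> in_nilrad x.
Proof. by case=> k xnk0; exists (n * k)%N; rewrite exprM. Qed.

Lemma delta_n_ideal_of_n_ideal (R : comNzRingType)
    (d : (R -> Prop) -> (R -> Prop)) (I : R -> Prop) :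
  proper_idl I -> psubset I (d I) -> is_n_ideal (d I) -> is_delta_n_ideal d I.
Proof.
move=> pI sIdI [_ nId]; split=> // a b Iab a_nil.
exact: nId (sIdI _ Iab) a_nil.
Qed.

Lemma n_ideal_rad (R : comNzRingType) (I : R -> Prop) :
  is_delta_n_ideal (@ideal_rad R) I -> is_n_ideal (ideal_rad I).
Proof.
move=> [[idlI nI1] nI]; split; first exact: proper_idl_rad.
move=> a b [n Iabn] a_nil; rewrite exprMn in Iabn.
have [m Ibnm] : ideal_rad I (b ^+ n).
  by apply: (nI _ _ Iabn) => /in_nilradX.
by exists (n * m)%N; rewrite exprM.
Qed.

Lemma delta_n_idealS (R : comNzRingType) (d g : (R -> Prop) -> (R -> Prop))
    (I : R -> Prop) :
  psubset (d I) (g I) -> is_delta_n_ideal d I -> is_delta_n_ideal g I.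
Proof.
move=> sdg [pI nI]; split=> // a b Iab a_nil.
exact: sdg _ (nI _ _ Iab a_nil).
Qed.

Lemma delta_n_ideal_comp (R : comNzRingType) (d g : (R -> Prop) -> (R -> Prop))
    (I : R -> Prop) :
  proper_idl I -> psubset I (g I) ->
  is_delta_n_ideal d (g I) -> is_delta_n_ideal (fun J => d (g J)) I.
Proof.
move=> pI sIgI [_ nIg]; split=> // a b Iab a_nil.
exact: nIg (sIgI _ Iab) a_nil.
Qed.

Theorem proposition2p16 (R : comNzRingType)
  (d g : (R -> Prop) -> (R -> Prop)) (I : R -> Prop) :
  ideal_expansion d -> ideal_expansion g -> proper_idl I ->
  [/\ (is_n_ideal (d I) -> is_delta_n_ideal d I),
      (is_delta_n_ideal (@ideal_rad R) I -> is_n_ideal (@ideal_rad R I)),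
      ((forall J, is_idl J -> psubset (d J) (g J)) ->
         is_delta_n_ideal d I -> is_delta_n_ideal g I) &
      (is_delta_n_ideal d (g I) -> is_delta_n_ideal (fun J => d (g J)) I)].
Proof.
move=> [_ dE _] [_ gE _] pI; have idlI := pI.1.
split.
- exact: delta_n_ideal_of_n_ideal (dE I idlI).
- exact: n_ideal_rad.
- by move=> sdg; apply: delta_n_idealS (sdg I idlI).
- exact: delta_n_ideal_comp (gE I idlI).
Qed.
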